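(* Let $T$ be an iso-unique zero forcing tree with at least two vertices and let $\mathcal{P}$ be a minimum path cover of $T$. If a path $P\in\mathcal{P}$ consists of a single vertex $x$, then $x$ has a unique neighbor, and this neighbor is the middle vertex of a path $R\in\mathcal{P}$ with exactly three vertices (i.e., $R\cong P_3$).
   Context: Zero forcing: in a graph $G$, starting with an initial set $S\subseteq V(G)$ of active vertices, repeatedly apply the rule: if an active vertex $u$ has exactly one non-active neighbor $v$, then $v$ becomes active. $S$ is a zero forcing set if eventually all vertices become active; a minimum zero forcing set is one of minimum size. A graph is an iso-unique zero forcing graph if for every two minimum zero forcing sets $A,B$ there is an automorphism $\phi$ with $\phi(A)=B$. A path cover of a tree $T$ is a set of vertex-disjoint paths of $T$ (a single vertex counts as a path) covering all vertices of $T$; it is minimum if no path cover has fewer paths. *)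

From mathcomp Require Import all_boot all_order.
From mathcomp Require Import fingroup perm.
Set Implicit Arguments. Unset Strict Implicit. Unset Printing Implicit Defensive.

Section ZF.
Variables (V : finType) (e : rel V).

Definition simple_graph := symmetric e /\ irreflexive e.

Definition is_tree :=
  (forall x y, connect e x y) /\
  (forall s : seq V, uniq s -> path.cycle e s -> size s < 3).

(* one round of zero forcing: every active u with exactly one non-active
   neighbour v makes v active (all applicable forces performed at once) *)
Definition zf_step (S : {set V}) : {set V} :=
  S :|: [set v | [exists u, (u \in S) && ([set w | e u w & w \notin S] == [set v])]].

(* the final set of active vertices (reached after at most #|V| rounds) *)
Definition zf_closure (S : {set V}) : {set V} := iter #|V| zf_step S.

Definition zero_forcing_set (S : {set V}) := zf_closure S = [set: V].

Definition min_zero_forcing_set (S : {set V}) :=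
  zero_forcing_set S /\ forall S' : {set V}, zero_forcing_set S' -> #|S| <= #|S'|.

Definition graph_automorphism (phi : {perm V}) := forall x y, e (phi x) (phi y) = e x y.

Definition iso_unique_zf :=
  forall A B : {set V}, min_zero_forcing_set A -> min_zero_forcing_set B ->
    exists phi : {perm V}, graph_automorphism phi /\ phi @: A = B.

Definition path_vertex_set (A : {set V}) :=
  exists (x : V) (s : seq V), [/\ uniq (x :: s), path e x s & A = [set y in x :: s]].

Definition path_cover (P : {set {set V}}) :=
  partition P [set: V] /\ forall A, A \in P -> path_vertex_set A.

Definition min_path_cover (P : {set {set V}}) :=
  path_cover P /\ forall P' : {set {set V}}, path_cover P' -> #|P| <= #|P'|.

End ZF.

(* Forcing chains turn a zero forcing set into a path cover with as many paths, and in a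
   tree the first vertices (heads) of the paths of any path cover form a zero forcing set;
   hence the heads of a minimum path cover form a minimum zero forcing set.
   If an end q of a path Q is adjacent to a vertex z off Q, then z is interior to another
   path R; cutting R at z and appending Q gives a minimum cover whose heads differ from
   those of the old one in a single vertex.  Iso-uniqueness yields an automorphism between
   the two head sets, which preserves the sum of degrees, so the two differing heads have
   the same degree.  Repeating this moves strictly deeper into a branch of the tree, so in
   a minimum cover every end of a path is a leaf.  For a one-vertex path {x}, its unique
   neighbour y is interior to some path R, and re-routing at y shows that both neighbours
   of y on R are ends of paths, i.e. R = a y b. *)

From mathcomp Require Import all_boot all_order.
From mathcomp Require Import fingroup perm zify.
Set Implicit Arguments. Unset Strict Implicit. Unset Printing Implicit Defensive.

Section TreeZeroForcing.
Variables (V : finType) (e : rel V).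
Hypotheses (e_sym : symmetric e) (e_irr : irreflexive e).
Hypothesis acyclic : forall s : seq V, uniq s -> path.cycle e s -> size s < 3.

Definition degree (v : V) := #|[set w | e v w]|.

Definition avoid (a : V) : rel V := [rel x y | [&& e x y, x != a & y != a]].

Definition branch (a b : V) : {set V} := [set v | connect (avoid a) b v].

Lemma edge_neq x y : e x y -> x != y.
Proof. by apply: contraTneq => ->; rewrite e_irr. Qed.

Lemma avoid_sym a : symmetric (avoid a).
Proof. by move=> x y; rewrite /avoid /= e_sym; case: (e y x); rewrite //= andbC. Qed.

Lemma connect_avoid_sym a : connect_sym (avoid a).
Proof. exact: sym_connect_sym (avoid_sym a). Qed.

Lemma avoid_edge a x y : e x y -> x != a -> y != a -> avoid a x y.
Proof. by move=> *; apply/and3P. Qed.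

Lemma avoid_path_notin a x p : path (avoid a) x p -> a \notin p.
Proof.
elim: p x => //= y p IH x /andP[/and3P[_ _ ya] /IH].
by rewrite inE negb_or eq_sym ya.
Qed.

Lemma connect_avoid_rstep a u v w : connect (avoid a) u v -> e v w -> v != a -> w != a ->
  connect (avoid a) u w.
Proof. by move=> uv vw va wa; apply: connect_trans uv (connect1 (avoid_edge vw va wa)). Qed.

Lemma sorted_connect_avoid a c u w : sorted e c -> a \notin c -> u \in c -> w \in c ->
  connect (avoid a) u w.
Proof.
case: c => [|x s] // srt ac uc wc.
have pa : path (avoid a) x s.
  apply: (sub_in_path (P := predC1 a) (e := e)) => //.
    by move=> y z /= ya za eyz; apply: avoid_edge.
  by apply/allP => y yc /=; apply: contraNneq ac => <-.
have xc := path_connect pa.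
by apply: connect_trans (xc _ wc); rewrite connect_avoid_sym xc.
Qed.

(* Acyclicity: a path from u to w avoiding their common neighbour v would close a cycle. *)
Lemma tree_nbrs_separated v u w : e v u -> e v w -> u != w -> ~ connect (avoid v) u w.
Proof.
move=> evu evw uw /connectP[p pth lst]; move: lst; case/shortenP: pth => p' pth' uq' _ lst.
have : size (v :: u :: p') < 3.
  apply: acyclic.
    rewrite cons_uniq uq' andbT inE negb_or (edge_neq evu).
    exact: avoid_path_notin pth'.
  rewrite /= evu rcons_path -lst e_sym evw andbT.
  by apply: sub_path pth' => x y /and3P[].
by case: p' {pth' uq'} lst => [|z p'] //= lst; rewrite lst eqxx in uw.
Qed.

Lemma branch_self a b : b \in branch a b.
Proof. by rewrite inE connect0. Qed.

Lemma branch_notin a b : b != a -> a \notin branch a b.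
Proof.
move=> ba; rewrite inE; apply/negP => /(closed_connect (a := predC1 a)) closedC.
have : (b \in predC1 a) = (a \in predC1 a).
  by apply: closedC => x y /and3P[_ xa ya]; rewrite !inE xa ya.
by rewrite !inE ba eqxx.
Qed.

Lemma branch_sub a b a' b' : b' \in branch a b -> a \notin branch a' b' ->
  branch a' b' \subset branch a b.
Proof.
rewrite !inE => bb' nab; apply/subsetP => w; rewrite !inE => /connectP[p pth ->].
have allp : all (predC1 a) (b' :: p).
  by apply/allP => y yp /=; apply: contraNneq nab => <-; apply: path_connect pth _ yp.
have pa : path (avoid a) b' p.
  apply: (sub_in_path (P := predC1 a) (e := avoid a')) => //.
  by move=> y z /= ya za /and3P[eyz _ _]; apply: avoid_edge.
by apply: connect_trans bb' _; apply/connectP; exists p.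
Qed.

Lemma branch_lt p w p' w' : w != p -> p' \in branch p w -> e p' w' -> w' != p ->
  p \notin branch p' w' -> #|branch p' w'| < #|branch p w|.
Proof.
move=> wp p'b ep'w' w'p pb'.
have p'p : p' != p by apply: contraTneq p'b => ->; apply: branch_notin.
have w'b : w' \in branch p w.
  by move: p'b; rewrite !inE => p'b; apply: connect_avoid_rstep p'b ep'w' p'p w'p.
rewrite (cardsD1 p' (branch p w)) p'b add1n ltnS; apply: subset_leq_card.
apply/subsetP => y yb; rewrite in_setD1 (subsetP (branch_sub w'b pb')) // andbT.
apply: contraTneq yb => ->; apply: branch_notin; rewrite eq_sym; exact: edge_neq ep'w'.
Qed.

Definition chain (c : seq V) := [&& c != [::], sorted e c & uniq c].

Definition chain_cover (cs : seq (seq V)) :=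
  all chain cs /\ forall v, count (fun c : seq V => v \in c) cs = 1.

Definition min_chain_cover (cs : seq (seq V)) :=
  chain_cover cs /\ forall cs', chain_cover cs' -> size cs <= size cs'.

Variable x0 : V.

Lemma head_rev s : head x0 (rev s) = last x0 s.
Proof. by case/lastP: s => // s y; rewrite rev_rcons last_rcons. Qed.

Lemma sorted_rev_sym c : sorted e (rev c) = sorted e c.
Proof. by rewrite rev_sorted; apply: eq_sorted => x y /=; apply: e_sym. Qed.

Lemma chain_rev c : chain (rev c) = chain c.
Proof. by rewrite /chain sorted_rev_sym rev_uniq -size_eq0 size_rev size_eq0. Qed.

Lemma sorted_cat_edge pre a b post : sorted e (pre ++ a :: b :: post) -> e a b.
Proof. by elim: pre => [/andP[]|x pre IH /path_sorted]. Qed.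

Lemma chain_cat A B : chain A -> chain B -> e (last x0 A) (head x0 B) ->
  [disjoint A & B] -> chain (A ++ B).
Proof.
case: A => // a s; case: B => // b t /and3P[_ sA uA] /and3P[_ sB uB] eab dAB.
apply/and3P; split=> //; last by rewrite cat_uniq uA uB -disjoint_has disjoint_sym dAB.
by move: sA sB eab => /= sA sB eab; rewrite cat_path sA /= eab.
Qed.

Section Covers.
Variable cs : seq (seq V).
Hypothesis cover_cs : chain_cover cs.

Lemma chain_cover_has v : exists2 c, c \in cs & v \in c.
Proof. by apply/hasP; rewrite has_count cover_cs.2. Qed.

Lemma chain_cover_mem_uniq c1 c2 v : c1 \in cs -> c2 \in cs -> v \in c1 -> v \in c2 -> c1 = c2.
Proof.
move=> c1cs c2cs vc1 vc2; apply/eqP/negPn/negP => c12.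
have c2r : c2 \in rem c1 cs by apply: rem_mem; rewrite // eq_sym.
have := cover_cs.2 v; rewrite (seq.permP (perm_to_rem c1cs)) /= vc1 add1n => -[] /eqP.
by apply/negP; rewrite -lt0n -has_count; apply/hasP; exists c2.
Qed.

End Covers.

Lemma chain_cover_disjoint A B rest : chain_cover (A :: B :: rest) -> [disjoint A & B].
Proof.
case=> _ cnt; rewrite disjoint_has; apply/hasPn => v vA; apply/negP => vB.
by have := cnt v; rewrite /= vA vB.
Qed.

Lemma count_mem_flatten (cs : seq (seq V)) v : all uniq cs ->
  count (fun c : seq V => v \in c) cs = count_mem v (flatten cs).
Proof. by elim: cs => //= c cs IH /andP[uc /IH ->]; rewrite count_cat (count_uniq_mem _ uc). Qed.

Lemma chain_cover_replace cs1 cs2 rest : chain_cover (cs1 ++ rest) -> all chain cs2 ->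
  perm_eq (flatten cs1) (flatten cs2) -> chain_cover (cs2 ++ rest).
Proof.
case; rewrite all_cat => /andP[ch1 ch_rest] cnt ch2 p12.
split=> [|v]; first by rewrite all_cat ch2.
have uniqW cs : all chain cs -> all uniq cs by apply: sub_all => c /and3P[].
by rewrite -(cnt v) !count_cat !count_mem_flatten ?uniqW // (seq.permP p12).
Qed.

Lemma chain_cover_perm cs cs' : perm_eq cs cs' -> chain_cover cs -> chain_cover cs'.
Proof.
move=> pcs [ch cnt]; split=> [|v]; first by rewrite -(perm_all _ pcs).
by rewrite -(seq.permP pcs).
Qed.

Lemma chain_cover_rev pre A rest :
  chain_cover (pre ++ A :: rest) -> chain_cover (pre ++ rev A :: rest).
Proof.
case=> ch cnt; split=> [|v]; first by move: ch; rewrite !all_cat /= chain_rev.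
by rewrite -(cnt v) !count_cat /= mem_rev.
Qed.

Lemma min_chain_cover_perm cs cs' : perm_eq cs cs' -> min_chain_cover cs -> min_chain_cover cs'.
Proof.
move=> pcs [cov min]; split=> [|cs'' /min]; first exact: chain_cover_perm cov.
by rewrite (perm_size pcs).
Qed.

Lemma min_chain_cover_rev pre A rest :
  min_chain_cover (pre ++ A :: rest) -> min_chain_cover (pre ++ rev A :: rest).
Proof.
by case=> cov min; split=> [|cs /min]; [apply: chain_cover_rev | rewrite !size_cat].
Qed.

Lemma min_chain_cover_no_link A B rest :
  min_chain_cover (A :: B :: rest) -> ~ e (last x0 A) (head x0 B).
Proof.
case=> cov min eAB; have [/= /and3P[chA chB _] _] := cov.
have dAB := chain_cover_disjoint cov.
have covAB : chain_cover ([:: A ++ B] ++ rest).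
  apply: (chain_cover_replace (cs1 := [:: A; B])) => //=; last by rewrite !cats0.
  by rewrite (chain_cat chA chB eAB).
by have := min _ covAB; rewrite /= ltnn.
Qed.

Lemma chain_single c x : chain c -> [set v in c] = [set x] -> c = [:: x].
Proof.
case: c => // a s /and3P[_ _ uq] /setP E.
have ax : a = x by have := E a; rewrite !inE eqxx => /esym/eqP.
case: s uq E => [|b s] uq E; first by rewrite ax.
have bx : b = x by have := E b; rewrite !inE eqxx orbT => /esym/eqP.
by move: uq; rewrite /= inE ax bx eqxx.
Qed.

Lemma chain_cover_path_cover cs : chain_cover cs ->
  exists2 P : {set {set V}}, path_cover e P & #|P| <= size cs.
Proof.
move=> cov; exists [set A in map (fun c => [set v in c]) cs]; last first.
  by rewrite cardsE; apply: leq_trans (card_size _) _; rewrite size_map.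
split=> [|A]; last first.
  rewrite inE => /mapP[c c_cs ->]; have := allP cov.1 c c_cs.
  by case: c {c_cs} => // x s /and3P[_ srt uq]; exists x, s.
apply/and3P; split.
- apply/eqP/setP => v; rewrite in_setT; apply/bigcupP.
  have [c c_cs vc] := chain_cover_has cov v.
  by exists [set w in c]; rewrite inE ?map_f.
- apply/trivIsetP => A B; rewrite !inE => /mapP[c1 c1cs ->] /mapP[c2 c2cs ->] c12.
  rewrite -setI_eq0; apply/eqP/setP => v; rewrite !inE.
  apply/negbTE/andP => -[v1 v2].
  by rewrite (chain_cover_mem_uniq cov c1cs c2cs v1 v2) eqxx in c12.
- rewrite inE; apply/mapP => -[c /(allP cov.1)]; case: c => // x s _ /setP/(_ x).
  by rewrite !inE eqxx.
Qed.

Lemma path_cover_chain_cover P : path_cover e P ->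
  exists2 cs, chain_cover cs & map (fun c => [set v in c]) cs = enum P.
Proof.
case=> /and3P[/eqP coverP trivP _] pathP.
have [cs ch_cs map_cs] : exists2 cs, all chain cs & map (fun c => [set v in c]) cs = enum P.
  have : {subset enum P <= P} by move=> A; rewrite mem_enum.
  elim: (enum P) => [|A L IH] subP; first by exists [::].
  have [|cs ch_cs <-] := IH; first by move=> B LB; apply: subP; rewrite inE LB orbT.
  have [x [s [uq pth ->]]] := pathP A (subP A (mem_head _ _)).
  by exists ((x :: s) :: cs); rewrite //= ch_cs andbT; apply/and3P.
exists cs => //; split=> // v.
have -> : count (fun c : seq V => v \in c) cs = count (fun A : {set V} => v \in A) (enum P).
  by rewrite -map_cs count_map; apply: eq_count => c /=; rewrite inE.
have vP : v \in cover P by rewrite coverP in_setT.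
rewrite (@eq_in_count _ _ (pred1 (pblock P v))); last first.
  move=> A; rewrite mem_enum => AP /=; apply/idP/eqP => [vA|->]; last by rewrite mem_pblock.
  by rewrite (def_pblock trivP AP vA).
by rewrite count_uniq_mem ?enum_uniq // mem_enum pblock_mem.
Qed.

Lemma min_path_cover_chain_cover P : min_path_cover e P ->
  exists2 cs, min_chain_cover cs & map (fun c => [set v in c]) cs = enum P.
Proof.
case=> covP minP; have [cs cov map_cs] := path_cover_chain_cover covP.
exists cs => //; split=> // cs' /chain_cover_path_cover[P' covP' leP'].
by rewrite -(size_map (fun c => [set v in c])) map_cs -cardE (leq_trans (minP _ covP')).
Qed.

(* The forcing chains of a partial run of zero forcing with active set X: only the
   last vertex of a chain may still have inactive neighbours. *)
Definition forcing_chains (X : {set V}) (cs : seq (seq V)) :=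
  [/\ all chain cs, forall v, count (fun c : seq V => v \in c) cs = (v \in X) &
      forall c, c \in cs -> forall z, z \in c -> z != last x0 c ->
      forall w, e z w -> w \in X].

Lemma forcing_chains_init S : forcing_chains S [seq [:: s] | s <- enum S].
Proof.
split=> [|v|_ /mapP[s _ ->] z].
- by apply/allP => _ /mapP[s _ ->].
- rewrite count_map (@eq_count _ _ (pred1 v)) => [|s]; last by rewrite /= inE eq_sym.
  by rewrite count_uniq_mem ?enum_uniq // mem_enum.
- by rewrite inE => /eqP ->; rewrite eqxx.
Qed.

Lemma forcing_chains_force X cs u v : forcing_chains X cs -> u \in X -> v \notin X -> e u v ->
  (forall w, e u w -> w \notin X -> w = v) ->
  forcing_chains (v |: X) [seq if u \in c then rcons c v else c | c <- cs].
Proof.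
move=> [ch cnt inner] uX vX euv only.
have vcs c : c \in cs -> v \notin c.
  move=> c_cs; apply/negP => vc.
  have : 0 < count (fun c : seq V => v \in c) cs by rewrite -has_count; apply/hasP; exists c.
  by rewrite cnt (negbTE vX).
have ulast c : c \in cs -> u \in c -> u = last x0 c.
  move=> c_cs uc; apply/eqP/negPn/negP => ul.
  by have := inner c c_cs u uc ul v euv; rewrite (negbTE vX).
split.
- apply/allP => _ /mapP[c c_cs ->]; have := allP ch c c_cs.
  case uc: (u \in c) => //; have ul := ulast c c_cs uc.
  case: c c_cs uc ul => // a s c_cs _ ul /and3P[_ srt uq].
  rewrite /chain rcons_uniq uq (vcs _ c_cs) andbT -size_eq0 size_rcons /=.
  by rewrite rcons_path andbT -[last a s]/(last x0 (a :: s)) -ul euv andbT.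
- move=> w; rewrite count_map in_setU1.
  have [->|wv] := eqVneq w v.
    rewrite /=; transitivity (count (fun c : seq V => u \in c) cs); last by rewrite cnt uX.
    apply: eq_in_count => c c_cs /=.
    by case: (u \in c); rewrite ?mem_rcons ?mem_head // (negbTE (vcs c c_cs)).
  rewrite /= -cnt; apply: eq_count => c /=.
  by case: (u \in c); rewrite // mem_rcons inE (negbTE wv).
- move=> _ /mapP[c c_cs ->] z; case uc: (u \in c); last first.
    by move=> zc zl w ezw; rewrite in_setU1 (inner c c_cs z zc zl w ezw) orbT.
  rewrite mem_rcons inE last_rcons => /orP[/eqP -> |zc zv w ezw]; first by rewrite eqxx.
  rewrite in_setU1; have [zu|zu] := eqVneq z u.
    by case wX: (w \in X); rewrite ?orbT // (only w) ?eqxx -?zu ?wX.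
  by rewrite (inner c c_cs z zc _ w ezw) ?orbT // -(ulast c c_cs uc).
Qed.

Lemma zf_stepP X v : v \in zf_step e X -> v \notin X ->
  exists2 u, u \in X & [set w | e u w & w \notin X] = [set v].
Proof.
by rewrite /zf_step in_setU => /orP[-> //|]; rewrite inE => /existsP[u /andP[uX /eqP]]; exists u.
Qed.

Lemma forcing_chains_round (X Y : {set V}) cs : X \subset Y -> Y \subset zf_step e X ->
  forcing_chains Y cs -> exists2 cs', forcing_chains (zf_step e X) cs' & size cs' = size cs.
Proof.
have [k] := ubnP #|zf_step e X :\: Y|; elim: k Y cs => // k IH Y cs ltk XY YS fcY.
case: (set_0Vmem (zf_step e X :\: Y)) => [/eqP|[v]].
  rewrite setD_eq0 => SY; exists cs => //.
  by rewrite (_ : zf_step e X = Y) //; apply/eqP; rewrite eqEsubset SY YS.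
rewrite in_setD => /andP[vY vS]; have vX : v \notin X by apply: contra vY; apply: subsetP.
have [u uX /setP forced] := zf_stepP vS vX.
have euv : e u v by have := forced v; rewrite !inE eqxx => /andP[].
have only w : e u w -> w \notin Y -> w = v.
  move=> uw wY; apply/eqP; rewrite -in_set1 -forced inE uw.
  by apply: contra wY; apply: subsetP.
have fcY' := forcing_chains_force fcY (subsetP XY u uX) vY euv only.
have [|||cs' fc' size'] := IH _ _ _ _ _ fcY'; last by exists cs'; rewrite // size' size_map.
- rewrite -ltnS (leq_trans _ ltk) // setUC -setDDl (cardsD1 v (zf_step e X :\: Y)).
  by rewrite in_setD vY vS.
- by rewrite (subset_trans XY) ?subsetUr.
- by rewrite subUset sub1set vS YS.
Qed.

Lemma zero_forcing_chain_cover S : zero_forcing_set e S ->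
  exists2 cs, chain_cover cs & size cs = #|S|.
Proof.
have run i : exists2 cs, forcing_chains (iter i (zf_step e) S) cs & size cs = #|S|.
  elim: i => [|i [cs fc <-]]; last exact: forcing_chains_round (subxx _) (subsetUl _ _) fc.
  exists [seq [:: s] | s <- enum S]; first exact: forcing_chains_init.
  by rewrite size_map cardE.
rewrite /zero_forcing_set /zf_closure => zfS; have [cs [ch cnt _]] := run #|V|.
by exists cs => //; split=> // v; rewrite cnt zfS in_setT.
Qed.

Definition heads (cs : seq (seq V)) : {set V} := [set v in map (head x0) cs].

Lemma zf_closure_sub (S : {set V}) : S \subset zf_closure e S.
Proof.
by rewrite /zf_closure; elim: #|V| => //= n IH; apply: subset_trans IH (subsetUl _ _).
Qed.

Lemma zf_closure_fixed (S : {set V}) : zf_step e (zf_closure e S) = zf_closure e S.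
Proof.
pose it i := iter i (zf_step e) S.
suff /'exists_eqP[k /= fixk] : [exists k : 'I_#|V|.+1, it k.+1 == it k].
  by rewrite /zf_closure -(subnK (leq_ord k)) iterD iter_fix.
apply: contraT => /existsPn /(_ (Ordinal _)) /= grows.
suff big k : k <= #|V|.+1 -> k <= #|it k|.
  by have := big _ (leqnn _); rewrite ltnNge max_card.
elim: k => [|k IHk] lek //=; apply: leq_ltn_trans (IHk (ltnW lek)) _.
by rewrite proper_card // properEneq eq_sym grows //=; apply: subsetUl.
Qed.

Lemma zf_fixed_no_force (C : {set V}) u v : zf_step e C = C -> u \in C ->
  [set w | e u w & w \notin C] != [set v].
Proof.
move=> fixC uC; apply/eqP => forced.
have : v \in zf_step e C.
  rewrite /zf_step in_setU inE; apply/orP; right.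
  by apply/existsP; exists u; rewrite uC forced eqxx.
by rewrite fixC => vC; have := set11 v; rewrite -forced inE vC andbF.
Qed.

Lemma split_first_notin (C : {set V}) a s v : a \in C -> v \in a :: s -> v \notin C ->
  exists pre p f post,
    [/\ a :: s = pre ++ p :: f :: post, p \in C, f \notin C & {subset pre <= C}].
Proof.
elim: s a => [|b s IH] a aC; first by rewrite inE => /eqP ->; rewrite aC.
move=> vs vC; case bC: (b \in C); last by exists [::], a, b, s; rewrite bC.
have [|pre [p [f [post [-> pC fC preC]]]]] := IH b bC _ vC.
  by move: vs; rewrite inE => /predU1P[vC'|//]; rewrite vC' aC in vC.
exists (a :: pre), p, f, post; split=> // y.
by rewrite inE => /predU1P[->|/preC].
Qed.

(* As p cannot force f, it has a second inactive neighbour w, kept off c by acyclicity. *)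
Lemma chain_first_inactive (C : {set V}) c v : zf_step e C = C -> chain c ->
  head x0 c \in C -> v \in c -> v \notin C ->
  exists pre p f post w, [/\ c = pre ++ p :: f :: post, p \in C, f \notin C & {subset pre <= C}]
    /\ [/\ e p f, e p w, w \notin C, w != f & w \notin c].
Proof.
case: c => // a s fixC /and3P[_ srt uq] aC vs vC.
have [pre [p [f [post [Ec pC fC preC]]]]] := split_first_notin aC vs vC.
rewrite Ec in srt uq *; have epf := sorted_cat_edge srt.
have [w /andP[/andP[epw wC] wf]] : exists w, (e p w && (w \notin C)) && (w != f).
  apply/existsP; apply: contraR (zf_fixed_no_force f fixC pC) => /existsPn noW.
  apply/eqP/setP => w; rewrite !inE; apply/idP/eqP => [pw|->]; last by rewrite epf.
  by apply/eqP; apply: contraNT (noW w) => wf; rewrite pw.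
exists pre, p, f, post, w; split=> //; split=> //.
rewrite mem_cat negb_or; apply/andP; split; first by apply: contra wC; apply: preC.
rewrite !inE negb_or (negbTE wf) /=; apply/andP; split; first by apply: contraNneq wC => ->.
apply/negP => wpost; move: uq; rewrite cat_uniq => /and3P[_ _ /andP[pf _]].
apply: (tree_nbrs_separated epf epw); first by rewrite eq_sym.
apply: sorted_connect_avoid (path_sorted (cat_sorted2 srt).2) pf (mem_head _ _) _.
by rewrite inE wpost orbT.
Qed.

(* Descent on the branch at p containing w: an escape edge p -- w from a chain yields
   another one, (p', w'), strictly deeper inside that branch. *)
Lemma heads_fixed_no_escape (C : {set V}) cs :
  chain_cover cs -> zf_step e C = C -> heads cs \subset C ->
  forall p w c, c \in cs -> p \in c -> w \notin c -> p \in C -> w \notin C -> ~ e p w.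
Proof.
move=> cov fixC headsC p w; have [k] := ubnP #|branch p w|.
elim: k p w => // k IH p w ltk c c_cs pc wc pC wC epw.
have [c' c'_cs wc'] := chain_cover_has cov w.
have hc' : head x0 c' \in C by apply: (subsetP headsC); rewrite inE map_f.
have [pre [p' [f [post [w' [[Ec' p'C fC preC] [ep'f ep'w' w'C w'f w'c']]]]]]] :=
  chain_first_inactive fixC (allP cov.1 c' c'_cs) hc' wc' wC.
have /and3P[_ srt' uq'] := allP cov.1 c' c'_cs.
have pc' : p \notin c'.
  by apply: contraNN wc => pc'; rewrite (chain_cover_mem_uniq cov c_cs c'_cs pc pc').
have p'c' : p' \in c' by rewrite Ec' mem_cat mem_head orbT.
have w_fpost : w \in f :: post.
  move: wc'; rewrite Ec' mem_cat => /orP[/preC|]; first by rewrite (negbTE wC).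
  by rewrite inE => /predU1P[wp'|//]; rewrite wp' p'C in wC.
have p'b : p' \in branch p w by rewrite inE; apply: sorted_connect_avoid srt' pc' wc' p'c'.
have pb' : p \notin branch p' w'.
  apply/negP; rewrite inE => w'p.
  have p'p : p != p' by apply: contraNneq pc' => ->.
  have wp' : w != p' by apply: contraNneq wC => ->.
  have p'fpost : p' \notin f :: post.
    by move: uq'; rewrite Ec' cat_uniq => /and3P[_ _ /andP[]].
  apply: (tree_nbrs_separated ep'w' ep'f w'f).
  apply: connect_trans (connect_avoid_rstep w'p epw p'p wp') _.
  apply: sorted_connect_avoid p'fpost w_fpost (mem_head _ _).
  by move: srt'; rewrite Ec' => /cat_sorted2[_ /path_sorted].
have w'p : w' != p by apply: contraNneq w'C => ->.
apply: (IH p' w' _ c' c'_cs p'c' w'c' p'C w'C ep'w').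
by rewrite -ltnS (leq_trans _ ltk) // ltnS branch_lt // eq_sym edge_neq.
Qed.

Lemma heads_zero_forcing cs : chain_cover cs -> zero_forcing_set e (heads cs).
Proof.
move=> cov; have fixC := zf_closure_fixed (heads cs); have headsC := zf_closure_sub (heads cs).
apply/setP => v; rewrite in_setT; apply/negPn/negP => vC.
have [c c_cs vc] := chain_cover_has cov v.
have hc : head x0 c \in zf_closure e (heads cs) by apply: (subsetP headsC); rewrite inE map_f.
have [pre [p [f [post [w [[Ec pC _ _] [_ epw wC _ wc]]]]]]] :=
  chain_first_inactive fixC (allP cov.1 c c_cs) hc vc vC.
apply: (heads_fixed_no_escape cov fixC headsC c_cs _ wc pC wC epw).
by rewrite Ec mem_cat mem_head orbT.
Qed.


Lemma heads_card_le cs : #|heads cs| <= size cs.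
Proof. by rewrite cardsE (leq_trans (card_size _)) ?size_map. Qed.

Lemma min_chain_cover_zf_le cs S : min_chain_cover cs -> zero_forcing_set e S -> size cs <= #|S|.
Proof. by case=> _ min /zero_forcing_chain_cover[cs' /min le <-]. Qed.

Lemma min_chain_cover_heads cs : min_chain_cover cs ->
  min_zero_forcing_set e (heads cs) /\ #|heads cs| = size cs.
Proof.
move=> mincs; have zf := heads_zero_forcing mincs.1.
have ge := min_chain_cover_zf_le mincs.
split; first by split=> // S /ge; apply: leq_trans (heads_card_le cs).
by apply/eqP; rewrite eqn_leq heads_card_le ge.
Qed.

Lemma degree_automorphism (phi : {perm V}) v : graph_automorphism e phi ->
  degree (phi v) = degree v.
Proof.
move=> auto_phi; rewrite /degree -(card_imset [set w | e v w] (@perm_inj _ phi)).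
apply: eq_card => w; rewrite inE -{1}(permKV phi w) auto_phi.
apply/idP/imsetP => [vw|[w' vw' ->]]; first by exists (phi^-1 w)%g; rewrite ?inE ?permKV.
by rewrite permK; rewrite inE in vw'.
Qed.

Lemma degree_gt1 a y z : e a y -> e a z -> y != z -> 1 < degree a.
Proof.
move=> ay az yz; apply: leq_trans (subset_leq_card (_ : [set y; z] \subset _)).
  by rewrite cards2 yz.
by apply/subsetP => w; rewrite !inE => /orP[] /eqP ->.
Qed.

Lemma degree_other_nbr a y : 1 < degree a -> exists2 z, e a z & z != y.
Proof.
move=> deg_a; have : 0 < #|[set w | e a w] :\ y|.
  by move: deg_a; rewrite /degree (cardsD1 y); have := leq_b1 (y \in [set w | e a w]); lia.
by case/card_gt0P => z; rewrite !inE => /andP[zy az]; exists z.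
Qed.

Lemma chain_head_escape a t u : sorted e (a :: t) -> uniq (a :: t) -> 1 < degree a ->
  (t != [::] -> connect (avoid a) (head x0 t) u) ->
  exists z, [/\ e a z, z \notin a :: t & z != u].
Proof.
case: t => [|b t] srt uq deg_a tu.
  have [z az zu] := degree_other_nbr u deg_a.
  by exists z; rewrite inE eq_sym edge_neq.
have [z az zb] := degree_other_nbr b deg_a.
have ab : e a b by case/andP: srt.
have z_off : ~ connect (avoid a) b z by apply: tree_nbrs_separated; rewrite // eq_sym.
exists z; split=> //.
  rewrite inE negb_or eq_sym edge_neq //=; apply: contra_notN z_off => zt.
  by apply: sorted_connect_avoid (path_sorted srt) _ (mem_head _ _) zt; case/andP: uq.
by apply: contra_notN z_off => /eqP ->; apply: tu.
Qed.

Lemma chain_last_escape Q u : chain Q -> u \notin Q -> e u (head x0 Q) ->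
  1 < degree (last x0 Q) -> exists z, [/\ e (last x0 Q) z, z \notin Q & z != u].
Proof.
case/lastP: Q => [//|t a] /and3P[_ srt uq] uQ uq0; rewrite last_rcons => deg_a.
have srt' : sorted e (a :: rev t) by rewrite -rev_rcons sorted_rev_sym.
have uq' : uniq (a :: rev t) by rewrite -rev_rcons rev_uniq.
have [|z [az zt zu]] := chain_head_escape (u := u) srt' uq' deg_a.
  case: t srt uq uQ uq0 {srt' uq'} => // b t srt uq uQ ub _.
  move: uq srt; rewrite rcons_uniq -cats1 => /andP[abt _] /cat_sorted2[srt _].
  have tb := sorted_connect_avoid srt abt (mem_last _ _) (mem_head _ _).
  rewrite head_rev; apply: connect_avoid_rstep tb _ _ _.
  - by rewrite e_sym.
  - by apply: contraNneq abt => <-; apply: mem_head.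
  - by apply: contraNneq uQ => ->; rewrite mem_rcons mem_head.
by exists z; split=> //; rewrite mem_rcons; move: zt; rewrite !inE mem_rev.
Qed.

Section IsoUnique.
Hypothesis iso_unique : iso_unique_zf e.

(* Both head sets are minimum zero forcing sets; an automorphism mapping one onto the
   other preserves the degree sum, and the common heads cancel. *)
Lemma min_chain_cover_head_degree c1 r1 c2 r2 :
  min_chain_cover (c1 :: r1) -> min_chain_cover (c2 :: r2) ->
  map (head x0) r1 = map (head x0) r2 -> degree (head x0 c1) = degree (head x0 c2).
Proof.
move=> min1 min2 r12.
have heads_cons (c : seq V) r : heads (c :: r) = head x0 c |: heads r.
  by apply/setP => v; rewrite !inE.
have head_new c r : min_chain_cover (c :: r) -> head x0 c \notin heads r.
  case/min_chain_cover_heads => _; rewrite heads_cons cardsU1 /=.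
  by have := heads_card_le r; case: (_ \notin _) => //=; lia.
have [[zf1 _] [zf2 _]] := (min_chain_cover_heads min1, min_chain_cover_heads min2).
have [phi [auto_phi img]] := iso_unique zf1 zf2.
have : \sum_(v in heads (c2 :: r2)) degree v = \sum_(v in heads (c1 :: r1)) degree v.
  rewrite -img big_imset /=; last by move=> ? ? _ _; apply: perm_inj.
  by apply: eq_bigr => v _; apply: degree_automorphism.
rewrite !heads_cons !big_setU1 ?head_new //= /heads r12.
by move/addIn ->.
Qed.

Lemma min_chain_cover_split cs Q z : min_chain_cover cs -> Q \in cs -> z \notin Q ->
  e (last x0 Q) z ->
  exists r1 r2 rest, [/\ perm_eq cs (Q :: (r1 ++ z :: r2) :: rest), r1 != [::] & r2 != [::]].
Proof.
move=> mincs Qcs zQ Qz; have [R Rcs zR] := chain_cover_has mincs.1 z.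
have RQcs : R \in rem Q cs by apply: rem_mem => //; apply: contraNneq zQ => <-.
set rest := rem R (rem Q cs).
have pcs : perm_eq cs (Q :: R :: rest).
  by apply: perm_trans (perm_to_rem Qcs) _; rewrite perm_cons perm_to_rem.
have minR := min_chain_cover_perm pcs mincs.
have minR' := min_chain_cover_rev (pre := [:: Q]) minR.
case/splitPr: zR pcs minR minR' => r1 r2 pcs minR minR'.
exists r1, r2, rest; split=> //.
  by apply/eqP => r1nil; apply: (min_chain_cover_no_link minR); rewrite r1nil.
apply/eqP => r2nil; apply: (min_chain_cover_no_link minR').
by rewrite head_rev r2nil last_cat.
Qed.

Lemma min_chain_cover_reroute Q r1 z r2 rest :
  min_chain_cover (Q :: (r1 ++ z :: r2) :: rest) -> e (last x0 Q) z -> r2 != [::] ->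
  min_chain_cover (r2 :: (r1 ++ z :: rev Q) :: rest).
Proof.
case=> cov min Qz r2ne; split=> [|cs /min //].
have [/= /and3P[chQ /and3P[_ srtR uqR] _] _] := cov.
have dQR := chain_cover_disjoint cov.
have chr2 : chain r2.
  rewrite /chain r2ne (path_sorted (cat_sorted2 srtR).2).
  by move: uqR; rewrite cat_uniq => /and3P[_ _ /andP[]].
have chr1z : chain (rcons r1 z).
  move: srtR uqR; rewrite -cat_rcons cat_uniq => /cat_sorted2[srt1 _] /andP[uq1 _].
  by rewrite /chain -size_eq0 size_rcons srt1 uq1.
have dr1zQ : [disjoint rcons r1 z & rev Q].
  rewrite disjoint_sym (eq_disjoint (mem_rev Q)); apply: disjointWr dQR.
  by apply/subsetP => v; rewrite mem_rcons mem_cat !inE; case/orP=> ->; rewrite ?orbT.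
apply: (chain_cover_replace (cs1 := [:: Q; r1 ++ z :: r2]) (cs2 := [:: r2; r1 ++ z :: rev Q])
  (rest := rest)) => //.
  by rewrite /= chr2 -cat_rcons chain_cat ?chain_rev // last_rcons head_rev e_sym.
by apply/seq.permP => p; rewrite /= !count_cat /= count_rev; lia.
Qed.

Lemma min_chain_cover_step cs Q z : min_chain_cover cs -> Q \in cs -> z \notin Q ->
  e (last x0 Q) z ->
  exists cs' r, [/\ min_chain_cover cs', r \in cs', r != [::] & e z (head x0 r)] /\
    [/\ z \notin r, head x0 r \notin Q & degree (head x0 r) = degree (last x0 Q)].
Proof.
move=> mincs Qcs zQ Qz.
have [r1 [r2 [rest [pcs r1ne r2ne]]]] := min_chain_cover_split mincs Qcs zQ Qz.
have minQ := min_chain_cover_perm pcs mincs.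
have [/= /and3P[_ /and3P[_ srtR uqR] _] _] := minQ.1.
have [b [t Er2]] : exists b t, r2 = b :: t by case: (r2) r2ne => // b t _; exists b, t.
have r2R : head x0 r2 \in r1 ++ z :: r2 by rewrite Er2 mem_cat !inE eqxx !orbT.
exists (r2 :: (r1 ++ z :: rev Q) :: rest), r2; split; split=> //.
- exact: min_chain_cover_reroute.
- exact: mem_head.
- by move: srtR; rewrite Er2 => /sorted_cat_edge.
- by move: uqR; rewrite cat_uniq => /and3P[_ _ /andP[]].
- by rewrite (disjointFl (chain_cover_disjoint minQ.1) r2R).
rewrite -head_rev.
apply: (min_chain_cover_head_degree (min_chain_cover_reroute minQ Qz r2ne)).
  exact: (min_chain_cover_rev (pre := [::]) minQ).
by case: (r1) r1ne.
Qed.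

(* Infinite descent: re-routing at the far end of Q produces a path of the same head degree
   starting strictly deeper inside the branch at u containing Q. *)
Lemma min_chain_cover_head_leaf_nbr cs Q u : min_chain_cover cs -> Q \in cs ->
  Q != [::] -> u \notin Q -> e u (head x0 Q) -> degree (head x0 Q) <= 1.
Proof.
have [k] := ubnP #|branch u (head x0 Q)|; elim: k cs Q u => // k IH cs Q u ltk.
move=> mincs Qcs Qne uQ uq; rewrite leqNgt; apply/negP => deg_q.
have chQ : chain Q := allP mincs.1.1 Q Qcs.
have srtQ : sorted e Q by case/and3P: chQ.
have qQ : head x0 Q \in Q by case: (Q) Qne => // ? ? _; apply: mem_head.
have aQ : last x0 Q \in Q by case: (Q) Qne => // ? ? _; rewrite /= mem_last.
have minQ := min_chain_cover_perm (perm_to_rem Qcs) mincs.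
have deg_qa : degree (head x0 Q) = degree (last x0 Q).
  have minQ' := min_chain_cover_rev (pre := [::]) minQ.
  by rewrite -head_rev (min_chain_cover_head_degree minQ minQ').
have deg_a : 1 < degree (last x0 Q) by rewrite -deg_qa.
have [z [az zQ zu]] := chain_last_escape chQ uQ uq deg_a.
have [cs' [r [[mincs' rcs' rne zr] [zr' rQ deg_r]]]] := min_chain_cover_step mincs Qcs zQ az.
have ur : u \notin branch z (head x0 r).
  apply/negP; rewrite inE => ru.
  have qa : connect (avoid z) (head x0 Q) (last x0 Q) by apply: sorted_connect_avoid srtQ zQ qQ aQ.
  have ra : head x0 r != last x0 Q by apply: contraNneq rQ => ->.
  apply: (tree_nbrs_separated zr _ ra); first by rewrite e_sym.
  apply: connect_trans (connect_avoid_rstep ru uq _ _) qa; first by rewrite eq_sym.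
  by apply: contraNneq zQ => <-.
have deeper : #|branch z (head x0 r)| < k.
  rewrite -ltnS (leq_trans _ ltk) // ltnS branch_lt //.
  - by rewrite eq_sym edge_neq.
  - rewrite inE; apply: connect_avoid_rstep (sorted_connect_avoid srtQ uQ qQ aQ) az _ zu.
    by apply: contraNneq uQ => <-.
  - by apply: contraNneq ur => ->; apply: branch_self.
have := IH cs' r z deeper mincs' rcs' rne zr' zr.
by rewrite deg_r -deg_qa leqNgt deg_q.
Qed.

Lemma min_chain_cover_head_leaf cs c : min_chain_cover cs -> c \in cs ->
  degree (head x0 c) <= 1.
Proof.
move=> mincs ccs; rewrite leqNgt; apply/negP => deg_c.
have := allP mincs.1.1 c ccs; case: c ccs deg_c => // a t ccs deg_a /and3P[_ srt uq].
have [z [az zc _]] := chain_head_escape (u := head x0 t) srt uq deg_a (fun _ => connect0 _ _).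
have minc := min_chain_cover_rev (pre := [::]) (min_chain_cover_perm (perm_to_rem ccs) mincs).
have zc' : z \notin rev (a :: t) by rewrite mem_rev.
have az' : e (last x0 (rev (a :: t))) z by rewrite -head_rev revK.
have [cs' [r [[mincs' rcs' rne zr] [zr' _ deg_r]]]] :=
  min_chain_cover_step minc (mem_head _ _) zc' az'.
have := min_chain_cover_head_leaf_nbr mincs' rcs' rne zr' zr.
by rewrite deg_r -head_rev revK leqNgt deg_a.
Qed.

Lemma min_chain_cover_end_single Q r1 y r2 rest :
  min_chain_cover (Q :: (r1 ++ y :: r2) :: rest) -> e (last x0 Q) y -> r2 != [::] ->
  exists b, r2 = [:: b].
Proof.
move=> minQ Qy r2ne.
have leaf := min_chain_cover_head_leaf (min_chain_cover_reroute minQ Qy r2ne) (mem_head _ _).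
have [/= /and3P[_ /and3P[_ srtR uqR] _] _] := minQ.1.
case: r2 r2ne minQ leaf srtR uqR => // b [|d t] _ _ leaf srtR uqR; first by exists b.
have yb : e b y by rewrite e_sym (sorted_cat_edge srtR).
have bd : e b d by move: srtR; rewrite -cat_rcons; apply: sorted_cat_edge.
have yd : y != d.
  by move: uqR; rewrite cat_uniq => /and3P[_ _ /andP[]]; rewrite !inE negb_or => /andP[_ /norP[]].
by rewrite leqNgt (degree_gt1 yb bd yd) in leaf.
Qed.

Lemma min_chain_cover_singleton cs x y : min_chain_cover cs -> [:: x] \in cs -> e x y ->
  (forall z, e x z = (z == y)) /\ exists a b, [:: a; y; b] \in cs.
Proof.
move=> mincs xcs xy; have leaf_x := min_chain_cover_head_leaf mincs xcs.
split=> [z|].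
  apply/idP/eqP => [xz|->//]; apply/eqP; apply: contraTT leaf_x => zy.
  by rewrite -ltnNge (degree_gt1 xy xz) // eq_sym.
have yx : y \notin [:: x] by rewrite inE eq_sym edge_neq.
have [r1 [r2 [rest [pcs r1ne r2ne]]]] := min_chain_cover_split mincs xcs yx xy.
have minR := min_chain_cover_perm pcs mincs.
have minR' : min_chain_cover ([:: x] :: (rev r2 ++ y :: rev r1) :: rest).
  by have := min_chain_cover_rev (pre := [:: [:: x]]) minR; rewrite rev_cat rev_cons cat_rcons.
have [b Eb] := min_chain_cover_end_single minR xy r2ne.
have r1ne' : rev r1 != [::] by rewrite -size_eq0 size_rev size_eq0.
have [a Ea] := min_chain_cover_end_single minR' xy r1ne'.
exists a, b; rewrite (perm_mem pcs) -(revK r1) Ea Eb.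
by rewrite inE mem_head orbT.
Qed.

End IsoUnique.

Lemma connected_exists_nbr x : (forall a b, connect e a b) -> 1 < #|V| -> exists y, e x y.
Proof.
move=> conn two; have /card_gt0P[v] : 0 < #|[set~ x]| by rewrite cardsC1 -subn1 subn_gt0.
rewrite !inE => vx; have /connectP[[|y p] /= pth vE] := conn x v; first by rewrite vE eqxx in vx.
by case/andP: pth => xy _; exists y.
Qed.

End TreeZeroForcing.

Theorem lemma3p8 (V : finType) (e : rel V) :
  simple_graph e -> is_tree e -> iso_unique_zf e -> 1 < #|V| ->
  forall P : {set {set V}}, min_path_cover e P ->
  forall x : V, [set x] \in P ->
  exists y : V, (forall z, e x z = (z == y)) /\
    exists2 R, R \in P &
      exists a b : V, [/\ R = [set a; y; b], uniq [:: a; y; b], e a y & e y b].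
Proof.
move=> [e_sym e_irr] [conn acyclic] iso two_vertices P minP x xP.
have [cs mincs map_cs] := min_path_cover_chain_cover minP.
have csP c : c \in cs -> [set v in c] \in P by move=> ccs; rewrite -mem_enum -map_cs map_f.
have xcs : [:: x] \in cs.
  have : [set x] \in map (fun c => [set v in c]) cs by rewrite map_cs mem_enum.
  by case/mapP => c ccs /esym/(chain_single (allP mincs.1.1 c ccs)) <-.
have [y xy] := connected_exists_nbr x conn two_vertices.
have [nbr [a [b abcs]]] := min_chain_cover_singleton e_sym e_irr acyclic x iso mincs xcs xy.
exists y; split=> //; exists [set v in [:: a; y; b]]; first exact: csP.
have /and3P[_ /and3P[ay yb _] uq] := allP mincs.1.1 _ abcs.
by exists a, b; split=> //; apply/setP => v; rewrite !inE orbA.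
Qed.
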